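(* Let $k$ be a positive integer and $n\ge 4$. Then the perfect number $N_{(n,2)}$ equals $k^2-k$ if $n=2k$, and equals $k^2$ if $n=2k+1$.
   Context: Let $S=K[x_1,\ldots,x_n]$ over a field $K$, and $sm(S)_d$ the set of square-free monomials of degree $d$. For a set $A$ of square-free monomials, $\sqcup(A)=\{gx_i\mid g\in A,\ x_i\nmid g\}$ and $\sqcap(A)=\{h\ne 1\mid h=g/x_i \text{ for some } g\in A,\ x_i\mid g\}$. A set $A\subseteq sm(S)_d$ is $(n,d)^{th}$ perfect if $\sqcup(A)=sm(S)_{d+1}$ and $\sqcap(A)=sm(S)_{d-1}$. The perfect number $N_{(n,d)}$ is the least cardinality of an $(n,d)^{th}$ perfect set. *)

(* Square-free monomials in x_1..x_n are encoded by their
   supports: a square-free monomial of degree d is a set S : {set 'I_n}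
   with #|S| = d (the monomial 1 is set0). *)
From mathcomp Require Import all_boot.
Set Implicit Arguments. Unset Strict Implicit. Unset Printing Implicit Defensive.

Definition sm (n d : nat) : {set {set 'I_n}} := [set S : {set 'I_n} | #|S| == d].

(* up-shadow: { g x_i | g in A, x_i does not divide g } *)
Definition sqcup (n : nat) (A : {set {set 'I_n}}) : {set {set 'I_n}} :=
  [set i |: S | S in A, i in ~: S].

(* down-shadow: { h <> 1 | h = g / x_i, g in A, x_i divides g } *)
Definition sqcap (n : nat) (A : {set {set 'I_n}}) : {set {set 'I_n}} :=
  [set S :\ i | S in A, i in S] :\ set0.

Definition perfect (n d : nat) (A : {set {set 'I_n}}) : bool :=
  [&& A \subset sm n d, sqcup A == sm n d.+1 & sqcap A == sm n d.-1].

Definition is_perfect_number (n d N : nat) : Prop :=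
  (exists A : {set {set 'I_n}}, perfect d A /\ #|A| = N) /\
  (forall A : {set {set 'I_n}}, perfect d A -> N <= #|A|).

(* View a set A of square-free quadratic monomials as a graph on the n
   variables. Every square-free cubic monomial lies in the up-shadow of A, so
   every triple of variables spans an edge of A: the complement of A is
   triangle-free. Removing a non-adjacent pair u, v (every other vertex is
   joined to u or to v) gives, by induction, the Mantel-type bound
   (n - 1)^2 <= 4 |A| + 1. Conversely, the disjoint union of two cliques on
   floor(n/2) and ceil(n/2) vertices is perfect and attains this bound. *)

From mathcomp Require Import all_boot zify.
Set Implicit Arguments. Unset Strict Implicit. Unset Printing Implicit Defensive.

Section Shadows.

Variable n : nat.
Implicit Types (A : {set {set 'I_n}}) (S T : {set 'I_n}).

Lemma sqcup_sub_sm d A : A \subset sm n d -> sqcup A \subset sm n d.+1.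
Proof.
move=> /subsetP smA; apply/subsetP => _ /imset2P [S i /smA + iS ->].
by rewrite !inE in iS *; rewrite cardsU1 iS => /eqP ->.
Qed.

Lemma sqcap_sub_sm d A : A \subset sm n d -> sqcap A \subset sm n d.-1.
Proof.
move=> /subsetP smA; apply/subsetP => _ /setD1P [_ /imset2P [S i /smA + iS ->]].
by rewrite !inE (cardsD1 i S) iS => /eqP <-.
Qed.

Lemma perfect_subE d A : perfect d A =
  [&& A \subset sm n d, sm n d.+1 \subset sqcup A & sm n d.-1 \subset sqcap A].
Proof.
rewrite /perfect; case smA: (A \subset sm n d) => //=.
by rewrite !eqEsubset sqcup_sub_sm ?sqcap_sub_sm.
Qed.

Lemma mem_sqcup A S T : S \in A -> S \subset T -> #|T| = #|S|.+1 -> T \in sqcup A.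
Proof.
move=> SA sST cardT.
have /card_gt0P [i /setDP [iT iS]] : 0 < #|T :\: S|.
  by rewrite cardsD (setIidPr sST) cardT subSnn.
have -> : T = i |: S.
  by apply/eqP; rewrite eq_sym eqEcard subUset sub1set iT sST cardsU1 iS cardT /=.
by apply/imset2P; exists S i; rewrite ?inE.
Qed.

Lemma mem_sqcap A S i : S \in A -> i \in S -> S :\ i != set0 -> S :\ i \in sqcap A.
Proof. by move=> SA iS nz; rewrite !inE nz; apply/imset2P; exists S i. Qed.

End Shadows.

Lemma sqcup_triangle n (A : {set {set 'I_n}}) u v w :
  A \subset sm n 2 -> sm n 3 \subset sqcup A -> u != v -> u != w -> v != w ->
  [|| [set u; v] \in A, [set u; w] \in A | [set v; w] \in A].
Proof.
move=> /subsetP smA /subsetP up3 uv uw vw.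
have : u |: [set v; w] \in sm n 3 by rewrite inE cardsU1 cards2 vw !inE negb_or uv uw.
move=> /up3 /imset2P [S i SA _ uvwE].
have /cards2P [a [b [ab Sab]]] : #|S| == 2 by have := smA S SA; rewrite inE.
have [aT bT] : a \in u |: [set v; w] /\ b \in u |: [set v; w].
  by rewrite uvwE Sab !inE !eqxx !orbT.
have pairC x y : ([set x; y] \in A) = ([set y; x] \in A) by rewrite setUC.
move: SA; rewrite Sab.
by move: aT bT ab; rewrite !inE => /or3P [] /eqP -> /or3P [] /eqP ->;
  rewrite ?eqxx // => _; rewrite ?(pairC v u) ?(pairC w u) ?(pairC w v) => ->; rewrite ?orbT.
Qed.

Lemma card_setD2 (T : finType) (W : {set T}) u v : u \in W -> v \in W -> u != v ->
  #|W :\: [set u; v]| = #|W| - 2.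
Proof.
move=> uW vW uv; rewrite cardsD (setIidPr _) ?cards2 ?uv //.
by rewrite subUset !sub1set uW vW.
Qed.

Section Mantel.

Variables (T : finType) (A : {set {set T}}).

Definition induced (W : {set T}) := [set e in A | e \subset W].

Lemma induced_card_step (W : {set T}) u v : u \in W -> v \in W -> u != v ->
  (forall w, w \in W -> w != u -> w != v -> ([set u; w] \in A) || ([set v; w] \in A)) ->
  #|induced (W :\: [set u; v])| + (#|W| - 2) <= #|induced W|.
Proof.
move=> uW vW uv cover; set W' := W :\: [set u; v].
have W'P w : w \in W' -> [/\ w \in W, w != u & w != v].
  by rewrite !inE negb_or => /andP [/andP [-> ->] ->].
pose edge w := if [set u; w] \in A then [set u; w] else [set v; w].
have edge_mem w : w \in edge w by rewrite /edge; case: ifP; rewrite !inE eqxx orbT.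
have edge_inj : {in W' &, injective edge}.
  move=> x y /W'P [_ xu xv] /W'P _ exy; have := edge_mem x.
  by rewrite exy /edge; case: ifP => _; rewrite !inE ?(negbTE xu) ?(negbTE xv) => /eqP.
have edge_induced w : w \in W' -> edge w \in induced W.
  move=> /W'P [wW wu wv]; rewrite inE /edge.
  by case: ifP (cover w wW wu wv) => [-> _|_ /= ->]; rewrite subUset !sub1set ?uW ?vW wW.
have edge_notin w : edge w \notin induced W'.
  rewrite inE negb_and; apply/orP; right; apply/subsetPn.
  by rewrite /edge; case: ifP => _; [exists u | exists v]; rewrite !inE ?eqxx ?orbT.
have disj : [disjoint induced W' & edge @: W'].
  rewrite -setI_eq0; apply/eqP/setP => e; rewrite in_setI in_set0.
  by apply/negbTE/andP => -[eW /imsetP [w _ ew]]; move: eW; rewrite ew (negbTE (edge_notin w)).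
have sub : induced W' :|: edge @: W' \subset induced W.
  rewrite subUset; apply/andP; split; last by apply/subsetP => _ /imsetP [w /edge_induced ? ->].
  apply/subsetP => e; rewrite !inE => /andP [-> /subset_trans]; apply.
  exact: subsetDl.
rewrite -(card_setD2 uW vW uv) -(card_in_imset edge_inj).
by have := subset_leq_card sub; rewrite cardsU (disjoint_setI0 disj) cards0 subn0.
Qed.

Hypothesis triangle : forall u v w, u != v -> u != w -> v != w ->
  [|| [set u; v] \in A, [set u; w] \in A | [set v; w] \in A].

Lemma induced_card_lb (W : {set T}) : (#|W| - 1) ^ 2 <= 4 * #|induced W| + 1.
Proof.
have [m] := ubnP #|W|; elim: m W => // m IH W; rewrite ltnS => Wm.
have [W_le1|W_gt1] := leqP #|W| 1; first by rewrite (_ : #|W| - 1 = 0); lia.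
suff [u [v [uW vW uv cover]]] : exists u v, [/\ u \in W, v \in W, u != v &
    forall w, w \in W -> w != u -> w != v -> ([set u; w] \in A) || ([set v; w] \in A)].
  have step := induced_card_step uW vW uv cover.
  have : (#|W| - 2 - 1) ^ 2 <= 4 * #|induced (W :\: [set u; v])| + 1.
    by rewrite -(card_setD2 uW vW uv); apply: IH; rewrite card_setD2 //; lia.
  rewrite !expnS !expn0 !muln1; nia.
(* Take a non-edge uv if there is one; otherwise W is a clique. *)
have [/existsP [u /andP [uW /existsP [v /and3P [vW uv uvA]]]] | /existsPn complete] :=
  boolP [exists u in W, exists v in W, (u != v) && ([set u; v] \notin A)].
  exists u, v; split=> // w _ wu wv.
  by have := @triangle u v w uv; rewrite ![_ == w]eq_sym wu wv (negbTE uvA); apply.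
have [u [v [uW vW uv]]] := card_gt1P W_gt1.
exists u, v; split=> // w wW wu _.
by have := complete u; rewrite uW /= => /existsPn/(_ w); rewrite wW eq_sym wu negbK => ->.
Qed.
End Mantel.

Lemma perfect2_card_lb n (A : {set {set 'I_n}}) : perfect 2 A -> (n - 1) ^ 2 <= 4 * #|A| + 1.
Proof.
rewrite perfect_subE => /and3P [smA up3 _].
have := induced_card_lb (fun u v w => sqcup_triangle smA up3) setT.
rewrite cardsT card_ord => /leq_trans; apply; rewrite leq_add2r leq_mul2l.
by apply/subset_leq_card/subsetP => e; rewrite inE => /andP [].
Qed.

Section SplitPairs.

Variables (n : nat) (L : {set 'I_n}).

Definition split_pairs : {set {set 'I_n}} :=
  [set e : {set 'I_n} | e \subset L & #|e| == 2] :|: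
  [set e : {set 'I_n} | e \subset ~: L & #|e| == 2].

Lemma card_split_pairs : #|split_pairs| = 'C(#|L|, 2) + 'C(#|~: L|, 2).
Proof.
rewrite cardsU !cards_draws (_ : _ :&: _ = set0) ?cards0 ?subn0 //.
apply/setP => e; rewrite !inE; apply/negbTE/negP => /andP [/andP [eL /eqP e2] /andP [eCL _]].
have : e \subset L :&: ~: L by rewrite subsetI eL eCL.
by rewrite setICr subset0 => /eqP e0; rewrite e0 cards0 in e2.
Qed.

Lemma split_pairs_sub : split_pairs \subset sm n 2.
Proof. by apply/subsetP => e; rewrite !inE => /orP [] /andP []. Qed.

Lemma pair_mem_split_pairs x y : x != y -> (x \in L) = (y \in L) -> [set x; y] \in split_pairs.
Proof.
move=> xy xyL; rewrite !inE cards2 xy !subUset !sub1set !inE -xyL.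
by case: (x \in L).
Qed.

Lemma split_pairs_up : sm n 3 \subset sqcup split_pairs.
Proof.
apply/subsetP => T; rewrite inE => /eqP T3.
suff [x [y [xT yT xy xyL]]] : exists x y, [/\ x \in T, y \in T, x != y & (x \in L) = (y \in L)].
  apply: (mem_sqcup (pair_mem_split_pairs xy xyL)); last by rewrite cards2 xy T3.
  by rewrite subUset !sub1set xT yT.
have := cardsID L T; rewrite T3.
have [/card_gt1P [x [y [xTL yTL xy]]] _ | TL_le1 TDL] := ltnP 1 #|T :&: L|.
  by exists x, y; move: xTL yTL; rewrite !inE => /andP [-> ->] /andP [-> ->].
have /card_gt1P [x [y [xTL yTL xy]]] : 1 < #|T :\: L| by lia.
by exists x, y; move: xTL yTL; rewrite !inE => /andP [/negbTE -> ->] /andP [/negbTE -> ->].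
Qed.

Lemma split_pairs_down : 1 < #|L| -> 1 < #|~: L| -> sm n 1 \subset sqcap split_pairs.
Proof.
move=> L_gt1 CL_gt1; apply/subsetP => T; rewrite inE => /cards1P [j ->].
have [j' j'j j'L] : exists2 j', j' != j & (j' \in L) = (j \in L).
  have side (X : {set 'I_n}) : 1 < #|X| -> j \in X -> exists2 j', j' != j & j' \in X.
    move=> X_gt1 jX; have /card_gt0P [j' /setD1P [j'j j'X]] : 0 < #|X :\ j|.
      by move: X_gt1; rewrite (cardsD1 j X) jX.
    by exists j'.
  have [jL | jNL] := boolP (j \in L).
    by have [j' ? j'L] := side L L_gt1 jL; exists j'; rewrite ?j'L.
  have [j' ? j'L] : exists2 j', j' != j & j' \in ~: L by apply: side; rewrite ?inE.
  by exists j' => //; move: j'L; rewrite inE => /negbTE ->.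
have -> : [set j] = [set j'; j] :\ j' by rewrite setU1K // inE.
apply: mem_sqcap; [exact: pair_mem_split_pairs | exact: set21 |].
by apply/set0Pn; exists j; rewrite !inE eq_sym j'j eqxx orbT.
Qed.

Lemma split_pairs_perfect : 1 < #|L| -> 1 < #|~: L| -> perfect 2 split_pairs.
Proof.
by move=> L_gt1 CL_gt1; rewrite perfect_subE split_pairs_sub split_pairs_up split_pairs_down.
Qed.

End SplitPairs.

Lemma exists_card_set (T : finType) k : k <= #|T| -> exists L : {set T}, #|L| = k.
Proof.
by rewrite -bin_gt0 -card_draws => /card_gt0P [L]; rewrite inE => /eqP; exists L.
Qed.

Lemma perfect2_split n k : 1 < k -> k + 2 <= n ->
  exists A : {set {set 'I_n}}, perfect 2 A /\ #|A| = 'C(k, 2) + 'C(n - k, 2).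
Proof.
move=> k_gt1 kn; have [|L Lk] := @exists_card_set 'I_n k; first by rewrite card_ord; lia.
have CLk : #|~: L| = n - k by rewrite cardsCs setCK card_ord Lk.
exists (split_pairs L); rewrite card_split_pairs Lk CLk.
by split=> //; apply: split_pairs_perfect; rewrite ?Lk ?CLk; lia.
Qed.

Lemma bin2_double m : 'C(m, 2) * 2 = m * m.-1.
Proof. by elim: m => // m IH; rewrite binS bin1 mulnDl IH; case: m {IH} => //= m; lia. Qed.

Theorem theorem3p1 (k n : nat) :
  0 < k -> 4 <= n ->
  (n = 2 * k -> is_perfect_number n 2 (k ^ 2 - k)) /\
  (n = 2 * k + 1 -> is_perfect_number n 2 (k ^ 2)).
Proof.
move=> k_gt0 n_ge4; have Ck := bin2_double k; have Ck1 := bin2_double k.+1.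
split=> nk; have [A [perfA cardA]] := @perfect2_split n k ltac:(lia) ltac:(lia).
- split; first by exists A; split=> //; rewrite cardA (_ : n - k = k); lia.
  by move=> B /perfect2_card_lb; rewrite !expnS expn0 !muln1; nia.
- split; first by exists A; split=> //; rewrite cardA (_ : n - k = k.+1); lia.
  by move=> B /perfect2_card_lb; rewrite !expnS expn0 !muln1; nia.
Qed.
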